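(* Let $\mathsf{D}$ be an optiongraph and let $\mathrm{Con}(\mathsf{D})$ be the set of congruence relations on $\mathsf{D}$. Then the union ${\bowtie}:=\bigcup\mathrm{Con}(\mathsf{D})$ is a congruence relation on $\mathsf{D}$ (hence the maximum congruence relation).
   Context: An optiongraph is a nonempty set $\mathsf{D}$ of positions together with an option function $\mathrm{Opt}:\mathsf{D}\to 2^{\mathsf{D}}$. For an equivalence relation $\theta$ on $\mathsf{D}$, write $[p]_\theta$ for the class of $p$ and, for $S\subseteq\mathsf{D}$, $[S]_\theta:=\{[s]_\theta\mid s\in S\}$. An equivalence relation $\theta$ on $\mathsf{D}$ is a congruence relation if $p\mathrel{\theta}q$ implies $[\mathrm{Opt}(p)]_\theta=[\mathrm{Opt}(q)]_\theta$. *)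

From Stdlib Require Import RelationClasses.

Record optiongraph := {
  pos :> Type;
  pos_inhabited : inhabited pos;
  Opt : pos -> (pos -> Prop)
}.

Definition eqclass {D : Type} (theta : D -> D -> Prop) (p : D) : D -> Prop :=
  fun x => theta p x.

Definition classes {D : Type} (theta : D -> D -> Prop) (S : D -> Prop) : (D -> Prop) -> Prop :=
  fun C => exists s, S s /\ C = eqclass theta s.

Definition is_congruence (G : optiongraph) (theta : G -> G -> Prop) : Prop :=
  Equivalence theta /\
  forall p q : G, theta p q -> classes theta (Opt G p) = classes theta (Opt G q).

Definition Con (G : optiongraph) : (G -> G -> Prop) -> Prop := is_congruence G.

Definition bowtie (G : optiongraph) : G -> G -> Prop :=
  fun p q => exists theta, Con G theta /\ theta p q.

(* A relation [theta] is a zig-zag relation when [theta p q] lets every option of [p]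
   be matched by a theta-related option of [q]; an equivalence relation is a congruence
   exactly when it is a zig-zag relation.  The zig-zag property is preserved by unions
   and by transitive closure, so the transitive closure of the union of all congruences
   is again a congruence.  Hence it is contained in the union, which is therefore
   transitive, and so itself a congruence. *)
From Stdlib Require Import RelationClasses Relation_Operators
  FunctionalExtensionality PropExtensionality.

Definition matched {D : Type} (theta : D -> D -> Prop) (S S' : D -> Prop) : Prop :=
  forall a, S a -> exists b, S' b /\ theta a b.

Definition zigzag (G : optiongraph) (theta : G -> G -> Prop) : Prop :=
  forall p q, theta p q -> matched theta (Opt G p) (Opt G q).

Section EquivalenceClasses.
Variables (D : Type) (theta : D -> D -> Prop).
Hypothesis theta_equiv : Equivalence theta.

Lemma eqclass_eq a b : theta a b -> eqclass theta a = eqclass theta b.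
Proof.
  intros Hab. extensionality x. apply propositional_extensionality.
  unfold eqclass. split; intros H.
  - now rewrite <- Hab.
  - now rewrite Hab.
Qed.

Lemma eqclass_inj a b : eqclass theta a = eqclass theta b -> theta a b.
Proof.
  intros E. change (eqclass theta a b). rewrite E. unfold eqclass. reflexivity.
Qed.

Lemma classes_incl_of_matched S S' :
  matched theta S S' -> forall C, classes theta S C -> classes theta S' C.
Proof.
  intros M C [a [Sa ->]]. destruct (M a Sa) as [b [S'b Hab]].
  exists b. split; [exact S'b | apply eqclass_eq; exact Hab].
Qed.

Lemma matched_of_classes_eq S S' : classes theta S = classes theta S' -> matched theta S S'.
Proof.
  intros E a Sa.
  assert (Ha : classes theta S' (eqclass theta a)) by (rewrite <- E; now exists a).
  destruct Ha as [b [S'b Eab]]. exists b. split; [exact S'b | apply eqclass_inj; exact Eab].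
Qed.

Lemma classes_eq_of_matched S S' :
  matched theta S S' -> matched theta S' S -> classes theta S = classes theta S'.
Proof.
  intros M M'. extensionality C. apply propositional_extensionality.
  split; apply classes_incl_of_matched; assumption.
Qed.

End EquivalenceClasses.

Lemma is_congruence_iff (G : optiongraph) (theta : G -> G -> Prop) :
  is_congruence G theta <-> Equivalence theta /\ zigzag G theta.
Proof.
  split.
  - intros [Eq C]. split; [exact Eq|].
    intros p q H. apply matched_of_classes_eq; auto.
  - intros [Eq Z]. split; [exact Eq|].
    intros p q H. apply classes_eq_of_matched; auto.
    apply Z. symmetry. exact H.
Qed.

Lemma matched_mono {D : Type} (R R' : D -> D -> Prop) S S' :
  (forall x y, R x y -> R' x y) -> matched R S S' -> matched R' S S'.
Proof.
  intros HR M a Sa. destruct (M a Sa) as [b [S'b Hab]]. exists b; auto.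
Qed.

Lemma zigzag_clos_trans (G : optiongraph) (R : G -> G -> Prop) :
  zigzag G R -> zigzag G (clos_trans G R).
Proof.
  intros Z p q H. induction H as [p q H | p m q _ IHpm _ IHmq].
  - apply (matched_mono R); [intros; now apply t_step | now apply Z].
  - intros a Ha. destruct (IHpm a Ha) as [b [Hb Hab]].
    destruct (IHmq b Hb) as [c [Hc Hbc]].
    exists c. split; [exact Hc | eapply t_trans; eassumption].
Qed.

Lemma clos_trans_equivalence {D : Type} (R : D -> D -> Prop) :
  Reflexive R -> Symmetric R -> Equivalence (clos_trans D R).
Proof.
  intros Hrefl Hsym. split.
  - intros x. apply t_step, Hrefl.
  - intros x y H. induction H; [apply t_step; auto | eapply t_trans; eassumption].
  - intros x y z. apply t_trans.
Qed.

Section Bowtie.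
Variable G : optiongraph.

Lemma bowtie_refl : Reflexive (bowtie G).
Proof.
  intros x. exists eq. split; [|reflexivity].
  apply is_congruence_iff. split; [typeclasses eauto|].
  intros p q -> a Ha. exists a. auto.
Qed.

Lemma bowtie_sym : Symmetric (bowtie G).
Proof.
  intros x y [theta [Ctheta H]]. exists theta. split; [exact Ctheta|].
  destruct Ctheta as [Eq _]. symmetry. exact H.
Qed.

Lemma bowtie_zigzag : zigzag G (bowtie G).
Proof.
  intros p q [theta [Ctheta H]].
  apply (matched_mono theta).
  - intros x y Hxy. exists theta. auto.
  - apply is_congruence_iff in Ctheta. now apply Ctheta.
Qed.

Lemma clos_trans_bowtie_congruence : is_congruence G (clos_trans G (bowtie G)).
Proof.
  apply is_congruence_iff. split.
  - apply clos_trans_equivalence; [exact bowtie_refl | exact bowtie_sym].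
  - apply zigzag_clos_trans, bowtie_zigzag.
Qed.

Lemma bowtie_trans : Transitive (bowtie G).
Proof.
  intros x y z Hxy Hyz. exists (clos_trans G (bowtie G)).
  split; [exact clos_trans_bowtie_congruence | eapply t_trans; apply t_step; eassumption].
Qed.

End Bowtie.

Theorem mainTheorem3 (G : optiongraph) : is_congruence G (bowtie G).
Proof.
  apply is_congruence_iff. split.
  - split; [apply bowtie_refl | apply bowtie_sym | apply bowtie_trans].
  - apply bowtie_zigzag.
Qed.
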